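(* Let $\tilde{\mathbb{P}}$ be a probability measure under which $X_1,\ldots,X_n$ are i.i.d. positive-integer-valued random variables such that, for each $i$, the events $\{p\mid X_i\}$, $p\in\mathcal{P}$, $p\le n$, are mutually independent with $\tilde{\mathbb{P}}(p\mid X_i)=1/p$. For a prime $p$ let $Y_p:=\#\{1\le i\le n: p\mid X_i\}$, and for $k_1<k_2$ let $S(k_1,k_2):=\{p\in\mathcal{P}:k_1<p\le k_2\}$. Then for every $\epsilon>0$, for all sufficiently large $k$ and all sufficiently large $n$ (depending on $k,\epsilon$), \[ \frac{1}{n}\log\tilde{\mathbb{P}}\left(\sum_{p\in S(k,n)}Y_{p}^{2}>n^{2}\epsilon\right)\leq-\frac{\epsilon}{8}\log(k)+4. \] Consequently, for every $\epsilon>0$, \[ \limsup_{k\to\infty}\limsup_{n\to\infty}\frac{1}{n}\log\tilde{\mathbb{P}}\left(\sum_{p\in S(k,n)}Y_{p}^{2}>n^{2}\epsilon\right)=-\infty. \]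
   Context: $\mathcal{P}$ denotes the set of primes. *)

From Stdlib Require Import Reals Lra Lia ZArith Arith List Znumtheory.
Import ListNotations.
Open Scope R_scope.

(* The events involved in the theorem are finite Boolean combinations of the
   events {p | X_i}, so finite additivity is all that matters; every
   probability measure yields such a structure (Los-Marczewski extension). *)
Record prob_space (Omega : Type) := {
  Pr : (Omega -> Prop) -> R;
  Pr_nonneg : forall A, 0 <= Pr A;
  Pr_full : Pr (fun _ => True) = 1;
  Pr_ext : forall A B : Omega -> Prop, (forall w, A w <-> B w) -> Pr A = Pr B;
  Pr_add : forall A B : Omega -> Prop, (forall w, ~ (A w /\ B w)) ->
           Pr (fun w => A w \/ B w) = Pr A + Pr B
}.
Arguments Pr {Omega} _ _.

Definition Rprod_list (l : list nat) (f : nat -> R) : R :=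
  fold_right (fun i acc => f i * acc) 1 l.

Definition is_prime (p : nat) : Prop := prime (Z.of_nat p).

Definition hyps {Omega : Type} (ps : prob_space Omega) (n : nat)
  (X : nat -> Omega -> nat) : Prop :=
  (forall i w, (1 <= i <= n)%nat -> (0 < X i w)%nat) /\
  (forall A : nat -> nat -> Prop,
     Pr ps (fun w => forall i, (1 <= i <= n)%nat -> A i (X i w)) =
     Rprod_list (seq 1 n) (fun i => Pr ps (fun w => A i (X i w)))) /\
  (forall (i : nat) (A : nat -> Prop), (1 <= i <= n)%nat ->
     Pr ps (fun w => A (X i w)) = Pr ps (fun w => A (X 1%nat w))) /\
  (forall i, (1 <= i <= n)%nat ->
     forall T : list nat, NoDup T ->
       (forall p, In p T -> is_prime p /\ (p <= n)%nat) ->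
       Pr ps (fun w => forall p, In p T -> Nat.divide p (X i w)) =
       Rprod_list T (fun p => / INR p)).

Definition Y {Omega : Type} (n : nat) (X : nat -> Omega -> nat) (p : nat) (w : Omega) : nat :=
  length (filter (fun i => Nat.eqb (X i w mod p) 0) (seq 1 n)).

Definition sumY2 {Omega : Type} (n : nat) (X : nat -> Omega -> nat) (k1 k2 : nat)
  (w : Omega) : nat :=
  fold_right Nat.add 0%nat
    (map (fun p => if prime_dec (Z.of_nat p) then (Y n X p w * Y n X p w)%nat
                   else 0%nat)
         (seq (S k1) (k2 - k1))).

Definition bigEvent {Omega : Type} (n : nat) (X : nat -> Omega -> nat)
  (k : nat) (eps : R) : Omega -> Prop :=
  fun w => INR (sumY2 n X k n w) > INR n ^ 2 * eps.

(* Fix g = sqrt(eps k / 2) and call a prime p heavy (for an outcome) when Y_p p > g n.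
   Light primes contribute at most (g n)^2 sum_{p > k} 1/p^2 <= eps n^2 / 2, so on the
   event the heavy primes carry more than eps n^2 / 2.  Attaching to every prime p of
   (k, n] the set m_p of indices i with p | X_i if p is heavy, and the empty set
   otherwise, yields a "witness"; the event is covered by the union over witnesses W of
   {p | X_i for all i in m_p}, restricted to the W whose sets are admissible (empty or
   heavy) and satisfy sum |m_p|^2 > eps n^2 / 2.  Independence gives each such event
   probability prod_p p^(-|m_p|); inserting exp(lam (sum |m_p| - eps n / 2)) >= 1 makes
   the sum over witnesses factor into a product over primes of per-prime sums, each at
   most 4/3 because C(n,b) (e^lam / p)^b <= (e e^lam / g)^b <= 4^(-b) when b p > g n.
   With lam = ln(k) / 4 this gives P <= exp(- eps n ln(k) / 8) (4/3)^n. *)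

From Stdlib Require Import Reals Lra Lia ZArith Arith List Znumtheory Classical.
Import ListNotations.
Open Scope R_scope.

Fixpoint lsum {A} (l : list A) (f : A -> R) : R :=
  match l with [] => 0 | a :: l' => f a + lsum l' f end.

Fixpoint lprod {A} (l : list A) (f : A -> R) : R :=
  match l with [] => 1 | a :: l' => f a * lprod l' f end.

Lemma lsum_app {A} (l1 l2 : list A) f : lsum (l1 ++ l2) f = lsum l1 f + lsum l2 f.
Proof. induction l1 as [|a l IH]; simpl; [|rewrite IH]; ring. Qed.

Lemma lsum_map {A B} (l : list A) (g : A -> B) f : lsum (map g l) f = lsum l (fun x => f (g x)).
Proof. induction l as [|a l IH]; simpl; [|rewrite IH]; reflexivity. Qed.

Lemma lsum_flat_map {A B} (l : list A) (g : A -> list B) f :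
  lsum (flat_map g l) f = lsum l (fun x => lsum (g x) f).
Proof. induction l as [|a l IH]; simpl; [|rewrite lsum_app, IH]; reflexivity. Qed.

Lemma lsum_filter {A} (l : list A) (b : A -> bool) f :
  lsum (filter b l) f = lsum l (fun x => if b x then f x else 0).
Proof. induction l as [|a l IH]; simpl; [|destruct (b a); simpl; rewrite IH]; ring. Qed.

Lemma lsum_ext {A} (l : list A) f g : (forall x, In x l -> f x = g x) -> lsum l f = lsum l g.
Proof.
  induction l as [|a l IH]; intros H; simpl; auto.
  rewrite H, IH by auto with datatypes. reflexivity.
Qed.

Lemma lsum_le {A} (l : list A) f g : (forall x, In x l -> f x <= g x) -> lsum l f <= lsum l g.
Proof.
  induction l as [|a l IH]; intros H; simpl; [lra|].
  apply Rplus_le_compat; auto with datatypes.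
Qed.

Lemma lsum_nonneg {A} (l : list A) f : (forall x, In x l -> 0 <= f x) -> 0 <= lsum l f.
Proof.
  induction l as [|a l IH]; intros H; simpl; [lra|].
  apply Rplus_le_le_0_compat; auto with datatypes.
Qed.

Lemma lsum_zero {A} (l : list A) : lsum l (fun _ => 0) = 0.
Proof. induction l as [|a l IH]; simpl; [|rewrite IH]; ring. Qed.

Lemma lsum_scal {A} (l : list A) f c : lsum l (fun x => c * f x) = c * lsum l f.
Proof. induction l as [|a l IH]; simpl; [|rewrite IH]; ring. Qed.

Lemma lsum_plus {A} (l : list A) f g : lsum l (fun x => f x + g x) = lsum l f + lsum l g.
Proof. induction l as [|a l IH]; simpl; [|rewrite IH]; ring. Qed.

Lemma lprod_ext {A} (l : list A) f g : (forall x, In x l -> f x = g x) -> lprod l f = lprod l g.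
Proof.
  induction l as [|a l IH]; intros H; simpl; auto.
  rewrite H, IH by auto with datatypes. reflexivity.
Qed.

Lemma lprod_nonneg {A} (l : list A) f : (forall x, In x l -> 0 <= f x) -> 0 <= lprod l f.
Proof.
  induction l as [|a l IH]; intros H; simpl; [lra|].
  apply Rmult_le_pos; auto with datatypes.
Qed.

Lemma lprod_le {A} (l : list A) f g :
  (forall x, In x l -> 0 <= f x <= g x) -> lprod l f <= lprod l g.
Proof.
  induction l as [|a l IH]; intros H; simpl; [lra|].
  apply Rmult_le_compat; try apply H; auto with datatypes.
  apply lprod_nonneg; intros; apply H; auto with datatypes.
Qed.

Lemma lprod_mul {A} (l : list A) f g : lprod l (fun x => f x * g x) = lprod l f * lprod l g.
Proof. induction l as [|a l IH]; simpl; [|rewrite IH]; ring. Qed.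

Lemma lprod_const {A} (l : list A) c : lprod l (fun _ => c) = c ^ length l.
Proof. induction l as [|a l IH]; simpl; [|rewrite IH]; ring. Qed.

Lemma lprod_exp {A} (l : list A) f : lprod l (fun x => exp (f x)) = exp (lsum l f).
Proof. induction l as [|a l IH]; simpl; [rewrite exp_0|rewrite IH, exp_plus]; reflexivity. Qed.

Lemma lprod_comm {A B} (l1 : list A) (l2 : list B) h :
  lprod l1 (fun i => lprod l2 (h i)) = lprod l2 (fun j => lprod l1 (fun i => h i j)).
Proof.
  induction l1 as [|a l IH]; simpl.
  - rewrite lprod_const, pow1. reflexivity.
  - rewrite IH, <- lprod_mul. reflexivity.
Qed.

Lemma Rprod_list_lprod (l : list nat) f : Rprod_list l f = lprod l f.
Proof. induction l as [|a l IH]; simpl; [|rewrite <- IH]; reflexivity. Qed.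

Lemma lsum_delta (l : list nat) (F : nat -> R) c :
  NoDup l -> In c l -> lsum l (fun b => (if Nat.eqb c b then 1 else 0) * F b) = F c.
Proof.
  induction l as [|a l IH]; intros Hnd Hc; [destruct Hc|]; simpl.
  inversion Hnd as [|? ? Ha Hl]; subst.
  destruct (Nat.eqb_spec c a) as [<-|Hca].
  - rewrite (lsum_ext _ _ (fun _ => 0)), lsum_zero; [ring|].
    intros b Hb. destruct (Nat.eqb_spec c b); [subst; contradiction|ring].
  - destruct Hc as [->|Hc]; [contradiction|]. rewrite IH; auto. ring.
Qed.

Lemma lsum_by_level {A} (L : list A) (h : A -> nat) (F : nat -> R) n :
  (forall x, In x L -> (h x <= n)%nat) ->
  lsum L (fun x => F (h x)) =
  lsum (seq 0 (S n)) (fun b => INR (length (filter (fun x => Nat.eqb (h x) b) L)) * F b).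
Proof.
  induction L as [|a L IH]; intros Hh.
  - change (lsum [] (fun x => F (h x))) with 0.
    rewrite <- (lsum_zero (seq 0 (S n))). apply lsum_ext. intros; simpl; ring.
  - cbn [lsum]. rewrite IH by auto with datatypes.
    rewrite <- (lsum_delta (seq 0 (S n)) F (h a)) at 1
      by (apply seq_NoDup || (apply in_seq; specialize (Hh a (or_introl eq_refl)); lia)).
    rewrite <- lsum_plus. apply lsum_ext. intros b _.
    simpl filter. destruct (Nat.eqb (h a) b); simpl length; rewrite ?S_INR; ring.
Qed.

Section FinitelyAdditive.
Context {Omega : Type} (ps : prob_space Omega).

Lemma Pr_empty (A : Omega -> Prop) : (forall w, ~ A w) -> Pr ps A = 0.
Proof.
  intros H.
  assert (E : Pr ps A = Pr ps (fun w => A w \/ A w)) by (apply Pr_ext; intros w; tauto).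
  rewrite Pr_add in E by (intros w [h _]; exact (H w h)). lra.
Qed.

Lemma Pr_mono (A B : Omega -> Prop) : (forall w, A w -> B w) -> Pr ps A <= Pr ps B.
Proof.
  intros H.
  assert (E : Pr ps B = Pr ps (fun w => A w \/ (B w /\ ~ A w))).
  { apply Pr_ext. intros w. destruct (classic (A w)); intuition. }
  rewrite Pr_add in E by tauto.
  pose proof (Pr_nonneg _ ps (fun w => B w /\ ~ A w)). lra.
Qed.

Lemma Pr_union (A B : Omega -> Prop) : Pr ps (fun w => A w \/ B w) <= Pr ps A + Pr ps B.
Proof.
  assert (E : Pr ps (fun w => A w \/ B w) = Pr ps (fun w => A w \/ (B w /\ ~ A w))).
  { apply Pr_ext. intros w. destruct (classic (A w)); intuition. }
  rewrite E, Pr_add by tauto.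
  enough (Pr ps (fun w => B w /\ ~ A w) <= Pr ps B) by lra.
  apply Pr_mono. tauto.
Qed.

Lemma Pr_union_list {I} (L : list I) (F : I -> Omega -> Prop) :
  Pr ps (fun w => exists x, In x L /\ F x w) <= lsum L (fun x => Pr ps (F x)).
Proof.
  induction L as [|a L IH]; simpl.
  - rewrite Pr_empty; [lra|]. intros w [x [[] _]].
  - eapply Rle_trans; [apply Pr_mono with (B := fun w => F a w \/ exists x, In x L /\ F x w)|].
    + intros w [x [[<-|hx] hf]]; eauto.
    + eapply Rle_trans; [apply Pr_union|]. lra.
Qed.

End FinitelyAdditive.

Lemma ln_le_mono x y : 0 < x -> x <= y -> ln x <= ln y.
Proof. intros h [h'|<-]; [left; apply ln_increasing|]; lra. Qed.

Lemma exp_nat_mul (x : R) b : exp (INR b * x) = exp x ^ b.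
Proof.
  induction b as [|b IH]; [simpl; rewrite Rmult_0_l; apply exp_0|].
  rewrite S_INR, Rmult_plus_distr_r, Rmult_1_l, exp_plus, IH. simpl. ring.
Qed.

Lemma pow_succ_binomial_lower (x : R) c :
  0 <= x -> x ^ S c + INR (S c) * x ^ c <= (x + 1) ^ S c.
Proof.
  intros hx. induction c as [|c IH]; [simpl; lra|].
  assert (0 <= x ^ c) by (apply pow_le; auto).
  assert (0 <= INR c) by apply pos_INR.
  change ((x + 1) ^ S (S c)) with ((x + 1) * (x + 1) ^ S c).
  change (x ^ S (S c)) with (x * (x * x ^ c)).
  change (x ^ S c) with (x * x ^ c) in *.
  rewrite !S_INR in *. nra.
Qed.

(* A form of Stirling's bound: b^b <= e^b b!, via (1 + 1/b)^b <= e. *)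
Lemma pow_self_le_exp_fact b : INR b ^ b <= exp 1 ^ b * INR (fact b).
Proof.
  induction b as [|b IH]; [simpl; lra|].
  assert (Hstep : INR (S b) ^ b <= exp 1 * INR b ^ b).
  { destruct b as [|m]; [simpl; pose proof (exp_ineq1_le 1); lra|].
    assert (Hm : 0 < INR (S m)) by (apply lt_0_INR; lia).
    replace (INR (S (S m))) with (INR (S m) * (1 + / INR (S m)))
      by (rewrite (S_INR (S m)); field; lra).
    rewrite Rpow_mult_distr.
    assert ((1 + / INR (S m)) ^ S m <= exp 1).
    { apply Rle_trans with (exp (/ INR (S m)) ^ S m).
      - apply pow_incr. pose proof (Rinv_0_lt_compat _ Hm).
        pose proof (exp_ineq1_le (/ INR (S m))). lra.
      - rewrite <- exp_nat_mul, Rinv_r by lra. lra. }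
    assert (0 <= INR (S m) ^ S m) by (apply pow_le; lra). nra. }
  change (INR (S b) ^ S b) with (INR (S b) * INR (S b) ^ b).
  change (exp 1 ^ S b) with (exp 1 * exp 1 ^ b).
  rewrite fact_simpl, mult_INR.
  assert (0 < INR (S b)) by (apply lt_0_INR; lia).
  pose proof (exp_pos 1).
  assert (exp 1 * INR b ^ b <= exp 1 * (exp 1 ^ b * INR (fact b))) by (apply Rmult_le_compat_l; lra).
  nra.
Qed.

Lemma geometric_quarter_tail s len : lsum (seq s len) (fun b => (/4) ^ b) <= (/4) ^ s * (4/3).
Proof.
  revert s; induction len as [|len IH]; intros s; simpl.
  - assert (0 < (/4) ^ s) by (apply pow_lt; lra). lra.
  - specialize (IH (S s)). simpl in IH. assert (0 < (/4) ^ s) by (apply pow_lt; lra). lra.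
Qed.

(* Telescoping bound sum_{s < m <= s+len} 1/m^2 <= 1/s - 1/(s+len). *)
Lemma inv_sq_tail len s : (1 <= s)%nat ->
  lsum (seq (S s) len) (fun m => / INR m ^ 2) <= / INR s - / INR (s + len).
Proof.
  revert s; induction len as [|len IH]; intros s hs; cbn [seq lsum].
  - rewrite Nat.add_0_r. lra.
  - specialize (IH (S s) ltac:(lia)).
    replace (S s + len)%nat with (s + S len)%nat in IH by lia.
    assert (1 <= INR s) by (apply (le_INR 1); auto).
    rewrite S_INR in *.
    assert (/ (INR s + 1) ^ 2 <= / INR s - / (INR s + 1)).
    { apply Rle_trans with (/ (INR s * (INR s + 1))); [apply Rinv_le_contravar; nra|].
      right. field. lra. }
    lra.
Qed.

(* Subsets of {1..n} are encoded as boolean masks of length n, position j standing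
   for the index j+1; [ones m] is the size of the encoded subset. *)
Fixpoint masks (n : nat) : list (list bool) :=
  match n with
  | O => [[]]
  | S n' => map (cons false) (masks n') ++ map (cons true) (masks n')
  end.

Definition ones (m : list bool) : nat := length (filter (fun x => x) m).

Lemma masks_length n m : In m (masks n) -> length m = n.
Proof.
  revert m; induction n as [|n IH]; simpl; intros m H.
  - destruct H as [<-|[]]; reflexivity.
  - apply in_app_or in H.
    destruct H as [H|H]; apply in_map_iff in H; destruct H as [m' [<- H]]; simpl; auto.
Qed.

Lemma masks_complete n m : length m = n -> In m (masks n).
Proof.
  intros <-. induction m as [|a m IH]; simpl; auto.
  apply in_or_app. destruct a; [right|left]; apply in_map; exact IH.
Qed.

Lemma ones_le m : (ones m <= length m)%nat.
Proof. unfold ones. apply filter_length_le. Qed.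

Lemma ones_map {A} (f : A -> bool) l : ones (map f l) = length (filter f l).
Proof. unfold ones. induction l as [|a l IH]; simpl; auto. destruct (f a); simpl; auto. Qed.

Lemma length_filter_map {A B} (f : B -> bool) (g : A -> B) l :
  length (filter f (map g l)) = length (filter (fun x => f (g x)) l).
Proof. induction l as [|a l IH]; simpl; auto. destruct (f (g a)); simpl; auto. Qed.

Lemma length_filter_false {A} (l : list A) : length (filter (fun _ => false) l) = 0%nat.
Proof. induction l; simpl; auto. Qed.

Definition nmasks (n b : nat) : nat := length (filter (fun m => Nat.eqb (ones m) b) (masks n)).

Lemma nmasks_S_0 n : nmasks (S n) 0 = nmasks n 0.
Proof.
  unfold nmasks; simpl. rewrite filter_app, length_app, !length_filter_map.
  simpl. rewrite length_filter_false, Nat.add_0_r. reflexivity.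
Qed.

Lemma nmasks_S_S n b : nmasks (S n) (S b) = (nmasks n (S b) + nmasks n b)%nat.
Proof. unfold nmasks; simpl. rewrite filter_app, length_app, !length_filter_map. reflexivity. Qed.

(* Pascal's rule and [pow_succ_binomial_lower] give C(n,b) <= n^b / b!. *)
Lemma nmasks_bound n b : INR (nmasks n b) <= INR n ^ b / INR (fact b).
Proof.
  revert b; induction n as [|n IH]; intros b.
  - destruct b; unfold nmasks; simpl; lra.
  - destruct b as [|b].
    + rewrite nmasks_S_0. eapply Rle_trans; [apply IH|]. simpl. lra.
    + rewrite nmasks_S_S, plus_INR.
      pose proof (IH (S b)) as H1; pose proof (IH b) as H2.
      pose proof (pow_succ_binomial_lower (INR n) b (pos_INR n)) as HB.
      assert (0 < INR (fact b)) by apply INR_fact_lt_0.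
      assert (0 < INR (S b)) by (apply lt_0_INR; lia).
      rewrite fact_simpl, mult_INR in *. rewrite S_INR with (n := n).
      apply Rle_trans with ((INR n ^ S b + INR (S b) * INR n ^ b) / (INR (S b) * INR (fact b))).
      * replace (INR n ^ b / INR (fact b))
          with (INR (S b) * INR n ^ b / (INR (S b) * INR (fact b))) in H2 by (field; lra).
        unfold Rdiv in *. lra.
      * unfold Rdiv. apply Rmult_le_compat_r; auto.
        left; apply Rinv_0_lt_compat; nra.
Qed.

Definition isp (p : nat) : bool := if prime_dec (Z.of_nat p) then true else false.

Definition primes_in (k n : nat) : list nat := filter isp (seq (S k) (n - k)).

Lemma primes_in_spec k n p :
  In p (primes_in k n) -> is_prime p /\ (k < p)%nat /\ (p <= n)%nat.
Proof.
  unfold primes_in, isp. intros H. apply filter_In in H. destruct H as [H1 H2].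
  apply in_seq in H1. destruct (prime_dec (Z.of_nat p)); [|discriminate].
  split; [assumption|lia].
Qed.

Lemma primes_in_nodup k n : NoDup (primes_in k n).
Proof. apply NoDup_filter, seq_NoDup. Qed.

Lemma primes_in_length k n : (length (primes_in k n) <= n)%nat.
Proof.
  unfold primes_in. eapply Nat.le_trans; [apply filter_length_le|]. rewrite length_seq. lia.
Qed.

(* sum_{p in S(k,n)} 1/p^2 <= 1/k, comparing with all integers in (k, n]. *)
Lemma primes_in_inv_sq k n : (1 <= k)%nat ->
  lsum (primes_in k n) (fun p => / INR p ^ 2) <= / INR k.
Proof.
  intros hk. unfold primes_in. rewrite lsum_filter.
  apply Rle_trans with (lsum (seq (S k) (n - k)) (fun p => / INR p ^ 2)).
  - apply lsum_le. intros p hp. apply in_seq in hp. destruct (isp p); [lra|].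
    left; apply Rinv_0_lt_compat, pow_lt, lt_0_INR; lia.
  - eapply Rle_trans; [apply inv_sq_tail; auto|].
    assert (0 < / INR (k + (n - k))) by (apply Rinv_0_lt_compat, lt_0_INR; lia). lra.
Qed.

Lemma INR_fold_add (l : list nat) (h : nat -> nat) :
  INR (fold_right Nat.add 0%nat (map h l)) = lsum l (fun p => INR (h p)).
Proof. induction l as [|a l IH]; simpl; [|rewrite plus_INR, IH]; reflexivity. Qed.

Lemma INR_sumY2 {Omega : Type} n (X : nat -> Omega -> nat) k w :
  INR (sumY2 n X k n w) = lsum (primes_in k n) (fun p => INR (Y n X p w) ^ 2).
Proof.
  unfold sumY2, primes_in. rewrite INR_fold_add, lsum_filter.
  apply lsum_ext. intros p _. unfold isp.
  destruct (prime_dec (Z.of_nat p)); simpl; [rewrite mult_INR|]; ring.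
Qed.

Definition heavy (g : R) (n p b : nat) : bool :=
  if Rlt_dec (g * INR n) (INR b * INR p) then true else false.

Lemma light_primes_sum g n k (y : nat -> nat) : (1 <= k)%nat -> 0 <= g ->
  lsum (primes_in k n) (fun p => if heavy g n p (y p) then 0 else INR (y p) ^ 2)
  <= (g * INR n) ^ 2 / INR k.
Proof.
  intros hk hg.
  assert (Hgn : 0 <= g * INR n) by (apply Rmult_le_pos; [lra|apply pos_INR]).
  apply Rle_trans with ((g * INR n) ^ 2 * lsum (primes_in k n) (fun p => / INR p ^ 2)).
  - rewrite <- lsum_scal. apply lsum_le. intros p hp. apply primes_in_spec in hp.
    assert (Hp : 0 < INR p) by (apply lt_0_INR; lia).
    assert (0 < / INR p ^ 2) by (apply Rinv_0_lt_compat, pow_lt; auto).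
    unfold heavy. destruct (Rlt_dec (g * INR n) (INR (y p) * INR p)) as [_|h].
    + apply Rmult_le_pos; [apply pow_le|]; lra.
    + apply Rnot_lt_le in h. pose proof (pos_INR (y p)).
      replace (INR (y p) ^ 2) with ((INR (y p) * INR p) ^ 2 * / INR p ^ 2) by (field; lra).
      apply Rmult_le_compat_r; [lra|]. apply pow_incr. split; [nra|assumption].
  - unfold Rdiv. apply Rmult_le_compat_l; [apply pow_le; assumption|].
    apply primes_in_inv_sq; assumption.
Qed.

Fixpoint witnesses (ms : list (list bool)) (P : list nat) : list (list (nat * list bool)) :=
  match P with
  | [] => [[]]
  | p :: P' => flat_map (fun m => map (cons (p, m)) (witnesses ms P')) ms
  end.

Lemma witnesses_sum ms P (f : nat * list bool -> R) :
  lsum (witnesses ms P) (fun W => lprod W f) = lprod P (fun p => lsum ms (fun m => f (p, m))).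
Proof.
  induction P as [|p P IH]; simpl; [ring|].
  rewrite lsum_flat_map, <- IH, Rmult_comm, <- lsum_scal.
  apply lsum_ext. intros m _. rewrite lsum_map. simpl. rewrite lsum_scal. ring.
Qed.

Lemma witnesses_spec ms P W :
  In W (witnesses ms P) -> map fst W = P /\ forall x, In x W -> In (snd x) ms.
Proof.
  revert W; induction P as [|p P IH]; simpl; intros W H.
  - destruct H as [<-|[]]. split; [reflexivity|intros x []].
  - apply in_flat_map in H. destruct H as [m [hm H]]. apply in_map_iff in H.
    destruct H as [W' [<- H]]. apply IH in H. destruct H as [H1 H2]. simpl.
    rewrite H1. split; [reflexivity|]. intros x [<-|hx]; auto.
Qed.

Lemma witnesses_complete ms P (f : nat -> list bool) :
  (forall p, In p P -> In (f p) ms) -> In (map (fun p => (p, f p)) P) (witnesses ms P).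
Proof.
  induction P as [|p P IH]; simpl; intros H; [left; reflexivity|].
  apply in_flat_map. exists (f p). split; [apply H; left; reflexivity|].
  apply in_map, IH. intros; apply H; right; assumption.
Qed.

Definition divides_on {Omega : Type} (n : nat) (X : nat -> Omega -> nat)
  (W : list (nat * list bool)) (w : Omega) : Prop :=
  forall p m, In (p, m) W -> forall j, (j < n)%nat -> nth j m false = true ->
  Nat.divide p (X (S j) w).

Definition required_primes (W : list (nat * list bool)) (i : nat) : list nat :=
  map fst (filter (fun x => nth (i - 1) (snd x) false) W).

(* [divides_on] as an intersection over the indices i, the form in which
   independence of the X_i applies. *)
Lemma divides_on_by_index {Omega : Type} n (X : nat -> Omega -> nat) W w :
  divides_on n X W w <->
  forall i, (1 <= i <= n)%nat -> forall p, In p (required_primes W i) -> Nat.divide p (X i w).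
Proof.
  unfold required_primes. split.
  - intros H i hi p hp. apply in_map_iff in hp. destruct hp as [[p' m] [<- hx]].
    apply filter_In in hx. destruct hx as [hx hb]. simpl in hb |- *.
    replace i with (S (i - 1)) by lia. apply (H p' m hx); [lia|assumption].
  - intros H p m hin j hj hb. apply H; [lia|]. apply in_map_iff.
    exists (p, m). split; [reflexivity|]. apply filter_In. simpl. rewrite Nat.sub_0_r. auto.
Qed.

Lemma nodup_map_fst_filter {A} (W : list (nat * A)) f :
  NoDup (map fst W) -> NoDup (map fst (filter f W)).
Proof.
  induction W as [|a W IH]; simpl; intros H; auto. inversion H as [|? ? Ha HW]; subst.
  destruct (f a); simpl; auto. constructor; auto. intros hin. apply Ha.
  apply in_map_iff in hin. destruct hin as [x [<- hx]]. apply filter_In in hx.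
  apply in_map; tauto.
Qed.

Lemma lprod_map_fst_filter {A} (W : list (nat * A)) (b : nat * A -> bool) (f : nat -> R) :
  lprod (map fst (filter b W)) f = lprod W (fun x => if b x then f (fst x) else 1).
Proof. induction W as [|a W IH]; simpl; auto. destruct (b a); simpl; rewrite IH; ring. Qed.

Lemma lprod_mask c m s :
  lprod (seq s (length m)) (fun i => if nth (i - s) m false then c else 1) = c ^ ones m.
Proof.
  revert s; induction m as [|a m IH]; intros s; simpl; [reflexivity|].
  rewrite Nat.sub_diag.
  rewrite (lprod_ext _ _ (fun i => if nth (i - S s) m false then c else 1)).
  - rewrite IH. unfold ones; destruct a; simpl; ring.
  - intros i hi. apply in_seq in hi. replace (i - s)%nat with (S (i - S s)) by lia. reflexivity.
Qed.

(* Independence over the indices and, for each index, over the primes gives the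
   probability of the divisibility event of a witness. *)
Lemma Pr_divides_on {Omega : Type} (ps : prob_space Omega) n X k W :
  hyps ps n X -> In W (witnesses (masks n) (primes_in k n)) ->
  Pr ps (divides_on n X W) = lprod W (fun x => (/ INR (fst x)) ^ ones (snd x)).
Proof.
  intros [_ [Hind [_ Hdiv]]] HW. apply witnesses_spec in HW. destruct HW as [HW1 HW2].
  rewrite (Pr_ext _ ps _ _ (divides_on_by_index n X W)).
  rewrite (Hind (fun i x => forall p, In p (required_primes W i) -> Nat.divide p x)).
  rewrite Rprod_list_lprod.
  rewrite (lprod_ext _ _ (fun i => lprod (required_primes W i) (fun p => / INR p))).
  2:{ intros i hi. apply in_seq in hi. rewrite Hdiv, Rprod_list_lprod; [reflexivity|lia| |].
      - apply nodup_map_fst_filter. rewrite HW1. apply primes_in_nodup.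
      - intros p hp. apply in_map_iff in hp. destruct hp as [x [<- hx]].
        apply filter_In in hx. destruct hx as [hx _].
        assert (Hx : In (fst x) (primes_in k n)) by (rewrite <- HW1; apply in_map; auto).
        apply primes_in_spec in Hx. tauto. }
  unfold required_primes. rewrite (lprod_ext _ _
    (fun i => lprod W (fun x => if nth (i - 1) (snd x) false then / INR (fst x) else 1)))
    by (intros i _; apply (lprod_map_fst_filter W (fun x => nth (i - 1) (snd x) false))).
  rewrite lprod_comm. apply lprod_ext. intros x hx.
  rewrite <- (masks_length _ _ (HW2 x hx)). apply lprod_mask.
Qed.

Definition admissible (g : R) (n p b : nat) : bool := Nat.eqb b 0 || heavy g n p b.

(* Weight of level b for the prime p; the parameter a will be exp(lam). *)
Definition level_weight (a g : R) (n p b : nat) : R :=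
  if admissible g n p b then (a / INR p) ^ b else 0.

Definition weight (a g : R) (n : nat) (x : nat * list bool) : R :=
  level_weight a g n (fst x) (ones (snd x)).

Lemma weight_nonneg a g n x : 0 <= a -> (0 < fst x)%nat -> 0 <= weight a g n x.
Proof.
  intros ha hx. unfold weight, level_weight. destruct admissible; [|lra].
  apply pow_le. unfold Rdiv. apply Rmult_le_pos; [assumption|].
  left; apply Rinv_0_lt_compat, lt_0_INR; assumption.
Qed.

Definition witnessed {Omega : Type} (eps g : R) (n : nat) (X : nat -> Omega -> nat)
  (W : list (nat * list bool)) (w : Omega) : Prop :=
  divides_on n X W w /\
  (forall x, In x W -> admissible g n (fst x) (ones (snd x)) = true) /\
  eps * INR n ^ 2 / 2 < lsum W (fun x => INR (ones (snd x)) ^ 2).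

Lemma lsum_sq_le {A} (l : list A) f c :
  (forall x, In x l -> 0 <= f x <= c) -> lsum l (fun x => f x ^ 2) <= c * lsum l f.
Proof.
  intros H. rewrite <- lsum_scal. apply lsum_le. intros x hx.
  specialize (H x hx). simpl. nra.
Qed.

(* Chernoff-type bound: since the mask sizes of a witness sum to more than eps n / 2,
   multiplying by exp(lam (sum |m_p| - eps n / 2)) >= 1 only increases the bound
   prod_p p^(-|m_p|) given by independence. *)
Lemma Pr_witnessed {Omega : Type} (ps : prob_space Omega) eps lam g n X k W :
  hyps ps n X -> In W (witnesses (masks n) (primes_in k n)) -> 0 <= lam -> (0 < n)%nat ->
  Pr ps (witnessed eps g n X W)
  <= exp (- (lam * eps * INR n / 2)) * lprod W (weight (exp lam) g n).
Proof.
  intros Hh HW hl hn.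
  pose proof (witnesses_spec _ _ _ HW) as [HW1 HW2].
  assert (Hpos : forall x, In x W -> (0 < fst x)%nat).
  { intros x hx. assert (In (fst x) (primes_in k n)) as H by (rewrite <- HW1; apply in_map, hx).
    apply primes_in_spec in H. lia. }
  assert (Hn : 0 < INR n) by (apply lt_0_INR; assumption).
  pose proof (exp_pos (- (lam * eps * INR n / 2))).
  assert (0 <= lprod W (weight (exp lam) g n))
    by (apply lprod_nonneg; intros; apply weight_nonneg; [left; apply exp_pos|auto]).
  destruct (classic ((forall x, In x W -> admissible g n (fst x) (ones (snd x)) = true) /\
    eps * INR n ^ 2 / 2 < lsum W (fun x => INR (ones (snd x)) ^ 2))) as [[Hadm Hsq]|Hfail].
  2:{ rewrite Pr_empty; [nra|]. intros w [_ h]. tauto. }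
  set (S1 := lsum W (fun x => INR (ones (snd x)))).
  assert (HS1 : eps * INR n / 2 < S1).
  { assert (lsum W (fun x => INR (ones (snd x)) ^ 2) <= INR n * S1).
    { apply lsum_sq_le. intros x hx. split; [apply pos_INR|]. apply le_INR.
      rewrite <- (masks_length _ _ (HW2 x hx)). apply ones_le. }
    apply Rmult_lt_reg_l with (INR n); [assumption|]. nra. }
  eapply Rle_trans; [apply Pr_mono with (B := divides_on n X W); intros w [h _]; exact h|].
  rewrite (Pr_divides_on ps n X k W Hh HW).
  rewrite (lprod_ext W (weight (exp lam) g n)
    (fun x => (/ INR (fst x)) ^ ones (snd x) * exp (lam * INR (ones (snd x))))).
  2:{ intros x hx. unfold weight, level_weight. rewrite (Hadm x hx).
      unfold Rdiv. rewrite Rpow_mult_distr, <- exp_nat_mul, (Rmult_comm lam). ring. }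
  rewrite lprod_mul, lprod_exp, lsum_scal. fold S1.
  set (V := lprod W (fun x => (/ INR (fst x)) ^ ones (snd x))).
  assert (0 <= V).
  { apply lprod_nonneg. intros x hx. apply pow_le.
    left; apply Rinv_0_lt_compat, lt_0_INR; auto. }
  assert (1 <= exp (- (lam * eps * INR n / 2)) * exp (lam * S1)).
  { rewrite <- exp_plus. pose proof (exp_ineq1_le (- (lam * eps * INR n / 2) + lam * S1)). nra. }
  nra.
Qed.

(* For a heavy level b, C(n,b) (a/p)^b <= (n a / p)^b / b! <= (b a / g)^b / b! <= (e a / g)^b. *)
Lemma heavy_level_term a g n p b : 0 < g -> (0 < p)%nat -> 0 <= a -> heavy g n p b = true ->
  INR (nmasks n b) * (a / INR p) ^ b <= (exp 1 * a / g) ^ b.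
Proof.
  intros hg hp ha Hb. unfold heavy in Hb.
  destruct (Rlt_dec (g * INR n) (INR b * INR p)) as [Hgt|]; [|discriminate].
  assert (Hp : 0 < INR p) by (apply lt_0_INR; assumption).
  assert (Hf : 0 < INR (fact b)) by apply INR_fact_lt_0.
  assert (Hap : 0 <= a / INR p) by (unfold Rdiv; apply Rmult_le_pos; [|left; apply Rinv_0_lt_compat]; lra).
  assert (Hag : 0 <= a / g) by (unfold Rdiv; apply Rmult_le_pos; [|left; apply Rinv_0_lt_compat]; lra).
  apply Rle_trans with (INR n ^ b / INR (fact b) * (a / INR p) ^ b).
  { apply Rmult_le_compat_r; [apply pow_le; assumption|apply nmasks_bound]. }
  assert (Hratio : 0 <= INR n * (a / INR p) <= INR b * (a / g)).
  { split; [apply Rmult_le_pos; [apply pos_INR|assumption]|].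
    apply Rmult_le_reg_r with (INR p * g); [nra|].
    replace (INR n * (a / INR p) * (INR p * g)) with (a * (g * INR n)) by (field; lra).
    replace (INR b * (a / g) * (INR p * g)) with (a * (INR b * INR p)) by (field; lra). nra. }
  apply Rle_trans with ((INR b * (a / g)) ^ b / INR (fact b)).
  { replace (INR n ^ b / INR (fact b) * (a / INR p) ^ b)
      with ((INR n * (a / INR p)) ^ b / INR (fact b)) by (rewrite Rpow_mult_distr; field; lra).
    unfold Rdiv at 1 3. apply Rmult_le_compat_r; [left; apply Rinv_0_lt_compat; lra|].
    apply pow_incr. assumption. }
  replace (exp 1 * a / g) with (exp 1 * (a / g)) by (field; lra).
  rewrite !Rpow_mult_distr.
  apply Rmult_le_reg_r with (INR (fact b)); [assumption|].
  replace (INR b ^ b * (a / g) ^ b / INR (fact b) * INR (fact b)) with (INR b ^ b * (a / g) ^ b)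
    by (field; lra).
  pose proof (pow_self_le_exp_fact b). pose proof (pow_le _ b Hag). nra.
Qed.

(* Summing the weights over all masks of one prime p > 0: the empty mask contributes 1
   and level b >= 1 at most (1/4)^b, provided e exp(lam) / g <= 1/4. *)
Lemma per_prime_weight lam g n p : (0 < p)%nat -> 0 < g -> exp 1 * exp lam / g <= / 4 ->
  lsum (masks n) (fun m => weight (exp lam) g n (p, m)) <= 4 / 3.
Proof.
  intros hp hg hr. unfold weight; simpl fst; simpl snd.
  rewrite (lsum_by_level (masks n) ones (level_weight (exp lam) g n p) n)
    by (intros m hm; rewrite <- (masks_length _ _ hm); apply ones_le).
  change (seq 0 (S n)) with (0%nat :: seq 1 n). cbn [lsum].
  assert (H0 : INR (nmasks n 0) * level_weight (exp lam) g n p 0 <= 1).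
  { pose proof (nmasks_bound n 0) as H. unfold level_weight; simpl in *. lra. }
  assert (H1 : lsum (seq 1 n) (fun b => INR (nmasks n b) * level_weight (exp lam) g n p b)
               <= lsum (seq 1 n) (fun b => (/ 4) ^ b)).
  { apply lsum_le. intros b hb. apply in_seq in hb. unfold level_weight, admissible.
    destruct (Nat.eqb_spec b 0) as [|_]; [lia|].
    destruct (heavy g n p b) eqn:Hb; simpl.
    - eapply Rle_trans; [apply heavy_level_term; [exact hg|exact hp|left; apply exp_pos|exact Hb]|].
      apply pow_incr. split; [|assumption].
      unfold Rdiv. apply Rmult_le_pos; [|left; apply Rinv_0_lt_compat; lra].
      pose proof (exp_pos 1); pose proof (exp_pos lam). nra.
    - rewrite Rmult_0_r. apply pow_le. lra. }
  pose proof (geometric_quarter_tail 1 n). unfold nmasks in *. simpl in *. lra.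
Qed.

Definition heavy_mask {Omega : Type} (g : R) (n : nat) (X : nat -> Omega -> nat)
  (p : nat) (w : Omega) : list bool :=
  map (fun i => andb (heavy g n p (Y n X p w)) (Nat.eqb (X i w mod p) 0)) (seq 1 n).

Lemma ones_heavy_mask {Omega : Type} g n (X : nat -> Omega -> nat) p w :
  ones (heavy_mask g n X p w) = if heavy g n p (Y n X p w) then Y n X p w else 0%nat.
Proof.
  unfold heavy_mask. rewrite ones_map.
  destruct (heavy g n p (Y n X p w)); [reflexivity|apply length_filter_false].
Qed.

Lemma nth_map_seq {B} (f : nat -> B) s len j d : (j < len)%nat ->
  nth j (map f (seq s len)) d = f (s + j)%nat.
Proof.
  intros h. rewrite nth_indep with (d' := f 0%nat) by (rewrite length_map, length_seq; auto).
  rewrite map_nth, seq_nth; auto.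
Qed.

(* Covering: on the event, the heavy masks of the primes of (k, n] form a witness,
   because the light primes carry at most (g n)^2 / k = eps n^2 / 2 of sum Y_p^2. *)
Lemma heavy_masks_witness {Omega : Type} eps g n (X : nat -> Omega -> nat) k w :
  (1 <= k)%nat -> 0 < g -> g * g = eps * INR k / 2 -> bigEvent n X k eps w ->
  witnessed eps g n X (map (fun p => (p, heavy_mask g n X p w)) (primes_in k n)) w.
Proof.
  intros hk hg hgg hE. split; [|split].
  - intros p m hin j hj hb. apply in_map_iff in hin. destruct hin as [q [Hq _]].
    injection Hq as <- <-. unfold heavy_mask in hb.
    rewrite nth_map_seq in hb by assumption. apply andb_prop in hb as [_ hb].
    apply Nat.Lcm0.mod_divide, Nat.eqb_eq. exact hb.
  - intros x hx. apply in_map_iff in hx. destruct hx as [p [<- _]]. simpl.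
    unfold admissible. rewrite ones_heavy_mask.
    destruct (heavy g n p (Y n X p w)) eqn:Hh; [rewrite Hh; apply Bool.orb_true_r|reflexivity].
  - rewrite lsum_map. cbn [fst snd].
    assert (Hsplit : lsum (primes_in k n) (fun p => INR (Y n X p w) ^ 2) =
      lsum (primes_in k n) (fun p => INR (ones (heavy_mask g n X p w)) ^ 2) +
      lsum (primes_in k n)
        (fun p => if heavy g n p (Y n X p w) then 0 else INR (Y n X p w) ^ 2)).
    { rewrite <- lsum_plus. apply lsum_ext. intros p _. rewrite ones_heavy_mask.
      destruct (heavy g n p (Y n X p w)); simpl; ring. }
    pose proof (light_primes_sum g n k (fun p => Y n X p w) hk ltac:(lra)) as Hlight.
    unfold bigEvent in hE. rewrite INR_sumY2 in hE.
    assert (0 < INR k) by (apply lt_0_INR; lia).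
    replace ((g * INR n) ^ 2 / INR k) with (eps * INR n ^ 2 / 2) in Hlight
      by (replace ((g * INR n) ^ 2) with (g * g * INR n ^ 2) by ring; rewrite hgg; field; lra).
    lra.
Qed.

(* Union bound over all witnesses, factorised prime by prime. *)
Lemma tail_bound_with_parameters {Omega : Type} (ps : prob_space Omega) eps lam g n
  (X : nat -> Omega -> nat) k :
  hyps ps n X -> (1 <= k)%nat -> (0 < n)%nat -> 0 < g -> g * g = eps * INR k / 2 ->
  0 <= lam -> exp 1 * exp lam / g <= / 4 ->
  Pr ps (bigEvent n X k eps) <= exp (- (lam * eps * INR n / 2)) * (4 / 3) ^ n.
Proof.
  intros Hh hk hn hg hgg hl hr.
  pose proof (exp_pos (- (lam * eps * INR n / 2))).
  eapply Rle_trans; [apply Pr_mono with (B := fun w => exists W,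
    In W (witnesses (masks n) (primes_in k n)) /\ witnessed eps g n X W w)|].
  { intros w hw. eexists. split; [|apply (heavy_masks_witness eps g n X k w hk hg hgg hw)].
    apply witnesses_complete. intros p _. apply masks_complete.
    unfold heavy_mask. rewrite length_map, length_seq. reflexivity. }
  eapply Rle_trans; [apply Pr_union_list|].
  eapply Rle_trans; [apply lsum_le with
    (g := fun W => exp (- (lam * eps * INR n / 2)) * lprod W (weight (exp lam) g n))|].
  { intros W hW. apply (Pr_witnessed ps eps lam g n X k W); assumption. }
  rewrite lsum_scal, witnesses_sum. apply Rmult_le_compat_l; [lra|].
  apply Rle_trans with ((4 / 3) ^ length (primes_in k n)).
  - rewrite <- lprod_const. apply lprod_le. intros p hp. split.
    + apply lsum_nonneg. intros m _. apply weight_nonneg; [left; apply exp_pos|].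
      apply primes_in_spec in hp. simpl. lia.
    + apply per_prime_weight; [apply primes_in_spec in hp; lia|assumption|assumption].
  - apply Rle_pow; [lra|apply primes_in_length].
Qed.

(* With lam = ln k / 4 and g = sqrt(eps k / 2) one has
   (e exp(lam) / g)^4 = 4 e^4 / (eps^2 k) <= 324 / 10^5 < (1/4)^4 once eps^2 k > 10^5. *)
Lemma parameter_choice eps k : 0 < eps -> 100000 < eps * eps * INR k ->
  exp 1 * exp (ln (INR k) / 4) / sqrt (eps * INR k / 2) <= / 4.
Proof.
  intros he hk. pose proof (pos_INR k).
  assert (Hk : 0 < INR k) by nra.
  set (E := exp 1); set (A := exp (ln (INR k) / 4)); set (g := sqrt (eps * INR k / 2)).
  assert (HA4 : A ^ 4 = INR k).
  { unfold A. rewrite <- exp_nat_mul. replace (INR 4 * (ln (INR k) / 4)) with (ln (INR k))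
      by (simpl; field). apply exp_ln; assumption. }
  assert (Hg : 0 < g) by (apply sqrt_lt_R0; nra).
  assert (Hgg : g * g = eps * INR k / 2) by (apply sqrt_sqrt; nra).
  assert (HE : E ^ 4 <= 3 ^ 4) by (apply pow_incr; split; [left; apply exp_pos|apply exp_le_3]).
  assert (H0 : 0 <= E * A / g).
  { unfold Rdiv. apply Rmult_le_pos; [|left; apply Rinv_0_lt_compat, Hg].
    apply Rmult_le_pos; left; apply exp_pos. }
  assert (H4 : (E * A / g) ^ 4 < (/ 4) ^ 4).
  { replace ((E * A / g) ^ 4) with (4 * E ^ 4 / (eps * eps * INR k))
      by (replace (4 * E ^ 4 / (eps * eps * INR k)) with (E ^ 4 * A ^ 4 / (g * g) ^ 2)
            by (rewrite HA4, Hgg; field; lra); field; lra).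
    apply Rmult_lt_reg_r with (eps * eps * INR k); [lra|].
    unfold Rdiv. rewrite Rmult_assoc, Rinv_l by lra. simpl in *. lra. }
  destruct (Rle_lt_dec (E * A / g) (/ 4)) as [h|h]; [exact h|].
  assert ((/ 4) ^ 4 <= (E * A / g) ^ 4) by (apply pow_incr; split; lra). lra.
Qed.

Lemma tail_bound {Omega : Type} (ps : prob_space Omega) eps k n (X : nat -> Omega -> nat) :
  0 < eps -> 100000 < eps * eps * INR k -> (0 < n)%nat -> hyps ps n X ->
  Pr ps (bigEvent n X k eps) <= exp (INR n * (1 - eps / 8 * ln (INR k))).
Proof.
  intros he hk hn Hh. pose proof (pos_INR k).
  assert (Hk1 : (1 <= k)%nat) by (destruct k; [simpl in hk; lra|lia]).
  assert (Hk : 1 <= INR k) by (apply (le_INR 1); exact Hk1).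
  assert (Hlam : 0 <= ln (INR k) / 4) by (pose proof (ln_le_mono 1 _ ltac:(lra) Hk); rewrite ln_1 in *; lra).
  eapply Rle_trans.
  { apply (tail_bound_with_parameters ps eps (ln (INR k) / 4) (sqrt (eps * INR k / 2)) n X k);
      try assumption.
    - apply sqrt_lt_R0. nra.
    - apply sqrt_sqrt. nra.
    - apply parameter_choice; assumption. }
  assert (Hpow : (4 / 3) ^ n <= exp (INR n)).
  { rewrite <- (Rmult_1_r (INR n)), exp_nat_mul. apply pow_incr.
    pose proof (exp_ineq1_le 1). lra. }
  replace (INR n * (1 - eps / 8 * ln (INR k)))
    with (- (ln (INR k) / 4 * eps * INR n / 2) + INR n) by field.
  rewrite exp_plus. apply Rmult_le_compat_l; [left; apply exp_pos|exact Hpow].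
Qed.

(* First claim of the theorem; [tail_bound] even gives the constant 1 instead of 4. *)
Lemma log_tail_bound : forall eps : R, 0 < eps ->
  exists K : nat, forall k : nat, (K <= k)%nat ->
  exists N : nat, forall n : nat, (N <= n)%nat ->
  forall (Omega : Type) (ps : prob_space Omega) (X : nat -> Omega -> nat),
    hyps ps n X ->
    Pr ps (bigEvent n X k eps) = 0 \/
    / INR n * ln (Pr ps (bigEvent n X k eps)) <= - (eps / 8) * ln (INR k) + 4.
Proof.
  intros eps he.
  destruct (INR_unbounded (100000 / (eps * eps))) as [K HK]. exists K. intros k hk.
  exists 1%nat. intros n hn Omega ps X Hh.
  assert (Hk : 100000 < eps * eps * INR k).
  { apply le_INR in hk. assert (0 < eps * eps) by nra.
    apply Rmult_lt_reg_r with (/ (eps * eps)); [apply Rinv_0_lt_compat; lra|].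
    replace (eps * eps * INR k * / (eps * eps)) with (INR k) by (field; lra). unfold Rdiv in HK. lra. }
  assert (Hn : 0 < INR n) by (apply lt_0_INR; lia).
  pose proof (tail_bound ps eps k n X he Hk ltac:(lia) Hh) as Hbound.
  pose proof (Pr_nonneg _ ps (bigEvent n X k eps)) as Hnn.
  destruct (Req_dec (Pr ps (bigEvent n X k eps)) 0) as [h0|h0]; [left; exact h0|right].
  apply ln_le_mono in Hbound; [|lra]. rewrite ln_exp in Hbound.
  apply Rle_trans with (/ INR n * (INR n * (1 - eps / 8 * ln (INR k)))).
  - apply Rmult_le_compat_l; [left; apply Rinv_0_lt_compat|]; assumption.
  - rewrite <- Rmult_assoc, Rinv_l by lra. lra.
Qed.

Theorem theorem3p5 :
  (forall eps : R, 0 < eps ->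
    exists K : nat, forall k : nat, (K <= k)%nat ->
    exists N : nat, forall n : nat, (N <= n)%nat ->
    forall (Omega : Type) (ps : prob_space Omega) (X : nat -> Omega -> nat),
      hyps ps n X ->
      Pr ps (bigEvent n X k eps) = 0 \/
      / INR n * ln (Pr ps (bigEvent n X k eps)) <= - (eps / 8) * ln (INR k) + 4)
  /\
  (forall eps : R, 0 < eps ->
    forall M : R,
    exists K : nat, forall k : nat, (K <= k)%nat ->
    exists N : nat, forall n : nat, (N <= n)%nat ->
    forall (Omega : Type) (ps : prob_space Omega) (X : nat -> Omega -> nat),
      hyps ps n X ->
      Pr ps (bigEvent n X k eps) = 0 \/
      / INR n * ln (Pr ps (bigEvent n X k eps)) <= M).
Proof.
  split; [exact log_tail_bound|].
  (* The bound - (eps/8) ln k + 4 drops below M as soon as ln k > 8 (4 - M) / eps. *)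
  intros eps he M. destruct (log_tail_bound eps he) as [K1 HK1].
  destruct (INR_unbounded (exp (8 * (4 - M) / eps))) as [K2 HK2].
  exists (Nat.max K1 K2). intros k hk.
  destruct (HK1 k ltac:(lia)) as [N HN]. exists N. intros n hn Omega ps X Hh.
  destruct (HN n hn Omega ps X Hh) as [h|h]; [left; exact h|right].
  assert (INR K2 <= INR k) by (apply le_INR; lia).
  assert (Hl : 8 * (4 - M) / eps < ln (INR k)).
  { rewrite <- (ln_exp (8 * (4 - M) / eps)).
    apply ln_increasing; [apply exp_pos|lra]. }
  assert (eps / 8 * (8 * (4 - M) / eps) = 4 - M) by (field; lra).
  nra.
Qed.
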